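(* Let $\mathcal{A}\subset\mathcal{B}\subset\mathcal{N}=\{1,\dots,N\}$ and let $\gamma,\ell,\kappa$ satisfy $$\tfrac12<\gamma\le 1,\qquad \ell\in\Big(0,2\cos^{-1}\big(\tfrac1\gamma-1\big)\Big),\qquad \kappa>\kappa_*(\gamma,\ell,D(\Omega_\mathcal{B})):=\frac{D(\Omega_\mathcal{B})}{\gamma\sin\ell-2(1-\gamma)\sin\frac{\ell}{2}}.$$ Let $\Theta$ be a solution of the Kuramoto model such that $\Theta_\mathcal{A}$ is a $\gamma$-ensemble of arclength $\le\ell$ at time $0$; replace each $\theta_i$, $i\in\mathcal{A}$, by its $2\pi$-shift realizing $D(\Theta_\mathcal{A}(0))\le\ell$ (this is again a solution). Then: (1) $\sup_{t\ge0}D(\Theta_\mathcal{A}(t))\le\ell$ and $\limsup_{t\to\infty}D(\Theta_\mathcal{A}(t))\le\phi_1(\gamma,\kappa,D(\Omega_\mathcal{B}))$; (2) $\sup_{t\ge0}D(\Theta_\mathcal{B}(t))<\infty$; (3) if in addition $$\frac{D(\Omega_\mathcal{B})}{\kappa}<\frac{(2\gamma-1)^{3/2}}{\sqrt{2\gamma}}\cdot\frac{2-\gamma}{\sqrt{\gamma/2}+(1-\gamma)},$$ then for $i,j\in\mathcal{A}$: if $\nu_i>\nu_j$, $$\frac{\nu_i-\nu_j}{\kappa}\le\liminf_{t\to\infty}(\theta_i(t)-\theta_j(t))\le\limsup_{t\to\infty}(\theta_i(t)-\theta_j(t))\le\frac{\pi}{2\sqrt2\,(\gamma\cos\phi_1-(1-\gamma))}\cdot\frac{\nu_i-\nu_j}{\kappa},$$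 with $\phi_1=\phi_1(\gamma,\kappa,D(\Omega_\mathcal{B}))$; and if $\nu_i=\nu_j$, then $\lim_{t\to\infty}(\theta_i(t)-\theta_j(t))=0$.
   Context: Kuramoto model: for $N\ge2$, $\Omega=(\nu_1,\dots,\nu_N)\in\mathbb{R}^N$, $\kappa\ge0$, the phases $\Theta(t)=(\theta_1,\dots,\theta_N)\in\mathbb{R}^N$ satisfy $\dot\theta_i=\nu_i+\frac{\kappa}{N}\sum_{j=1}^N\sin(\theta_j-\theta_i)$. For $\mathcal{A}\subset\mathcal{N}=\{1,\dots,N\}$: $\Theta_\mathcal{A}=(\theta_i)_{i\in\mathcal{A}}$, $D(\Theta_\mathcal{A})=\max_{i,j\in\mathcal{A}}|\theta_i-\theta_j|$, $D(\Omega_\mathcal{A})=\max_{i,j\in\mathcal{A}}|\nu_i-\nu_j|$. For $\gamma\in(1/2,1]$: $\Theta_\mathcal{A}$ is a $\gamma$-ensemble if $|\mathcal{A}|/N\ge\gamma$; it is a $\gamma$-ensemble of arclength $\le\ell$ at time $t_0$ if moreover, after replacing some $\theta_i$ ($i\in\mathcal{A}$) by $\theta_i+2\pi m_i$ with $m_i\in\mathbb{Z}$, one has $D(\Theta_\mathcal{A}(t_0))\le\ell$. Let $f(\theta)=\gamma\sin\theta-2(1-\gamma)\sin\frac\theta2$. For $\kappa>0$ with $D(\Omega_\mathcal{B})/\kappa<\max_{[0,2\cos^{-1}((1-\gamma)/\gamma)]}f$, $\phi_1(\gamma,\kappa,D(\Omega_\mathcal{B}))$ denotes the smaller root of $f(\theta)=D(\Omega_\mathcal{B})/\kappa$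 in $[0,2\cos^{-1}\frac{1-\gamma}{\gamma})$. *)

From mathcomp Require Import all_boot.
From Stdlib Require Import Reals.
From Coquelicot Require Import Coquelicot.
Set Implicit Arguments. Unset Strict Implicit. Unset Printing Implicit Defensive.

Open Scope R_scope.

Definition kuramoto_rhs (N : nat) (nu : 'I_N -> R) (kappa : R)
  (x : 'I_N -> R) (i : 'I_N) : R :=
  nu i + kappa / INR N * \big[Rplus/0]_(j < N) sin (x j - x i).

Definition kuramoto_solution (N : nat) (nu : 'I_N -> R) (kappa : R)
  (theta : 'I_N -> R -> R) : Prop :=
  forall (i : 'I_N) (t : R),
    is_derive (fun s => theta i s) t (kuramoto_rhs nu kappa (fun j => theta j t) i).

(* D(x_A) = max_{i,j in A} |x_i - x_j|  (0 if A is empty) *)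
Definition diam (N : nat) (A : {set 'I_N}) (x : 'I_N -> R) : R :=
  \big[Rmax/0]_(i in A) \big[Rmax/0]_(j in A) Rabs (x i - x j).

Definition gamma_ensemble (N : nat) (A : {set 'I_N}) (gamma : R) : Prop :=
  INR #|A| / INR N >= gamma.

Definition shift_on (N : nat) (A : {set 'I_N}) (m : 'I_N -> Z)
  (theta : 'I_N -> R -> R) : 'I_N -> R -> R :=
  fun i t => if i \in A then theta i t + 2 * PI * IZR (m i) else theta i t.

Definition gamma_ensemble_arclength (N : nat) (A : {set 'I_N}) (gamma ell : R)
  (theta : 'I_N -> R -> R) (t0 : R) : Prop :=
  gamma_ensemble A gamma /\
  exists m : 'I_N -> Z, diam A (fun i => shift_on A m theta i t0) <= ell.

Definition fgam (gamma th : R) : R := gamma * sin th - 2 * (1 - gamma) * sin (th / 2).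

Definition is_phi1 (gamma kappa d p : R) : Prop :=
  0 <= p < 2 * acos ((1 - gamma) / gamma) /\ fgam gamma p = d / kappa /\
  (forall q, 0 <= q < 2 * acos ((1 - gamma) / gamma) -> fgam gamma q = d / kappa -> p <= q).

Definition limsup_le (f : R -> R) (c : R) : Prop :=
  forall eps, 0 < eps -> exists T, forall t, T <= t -> f t <= c + eps.

Definition liminf_ge (f : R -> R) (c : R) : Prop :=
  forall eps, 0 < eps -> exists T, forall t, T <= t -> c - eps <= f t.

(* For i, j in the ensemble A, the relative velocity of th_i - th_j is
   nu_i - nu_j - 2 kappa sin((th_i - th_j)/2) * mean_k cos(th_k - midpoint); when
   the whole ensemble (a fraction >= gamma of all oscillators) lies in an arc of
   length L <= PI, the extremal pair is pulled together at rate at least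
   kappa f_gamma(L) - D(Omega_B).  Everything then follows from comparison
   (barrier) principles for the phase gaps:
   - kappa > kappa_* says that the level ell is contracting, so the gaps of A never
     exceed ell, and since f_gamma is concave on [0, 2 acos((1-gamma)/gamma)] every
     level between phi1 and ell is contracting, which pushes the diameter below
     phi1 + eps (part 1);
   - an oscillator of B cannot cross the levels ell + 2 PI n measured from the
     ensemble, because at a crossing the ensemble sits in an arc of length ell
     (part 2);
   - once the diameter is close to phi1 < acos((1-gamma)/gamma), each pair of A
     obeys two-sided velocity bounds, and reaching principles with Jordan's
     inequality give the asymptotic bounds on the relative phases (part 3). *)

From HB Require Import structures.
From mathcomp Require Import all_boot.
From Stdlib Require Import Reals Lra Lia ZArith Classical.
From Coquelicot Require Import Coquelicot.
Set Implicit Arguments. Unset Strict Implicit.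
Open Scope R_scope.

(* sin is 2*PI*k periodic for every integer k (Stdlib only states it for k : nat). *)
Lemma sin_shift_2PI x (k : Z) : sin (x + 2 * PI * IZR k) = sin x.
Proof.
destruct (Z_le_gt_dec 0 k) as [Hk|Hk].
- rewrite <- (Z2Nat.id k Hk), <- INR_IZR_INZ.
  replace (2 * PI * INR (Z.to_nat k)) with (2 * INR (Z.to_nat k) * PI) by ring.
  apply sin_period.
- pose proof (sin_period (x + 2 * PI * IZR k) (Z.to_nat (- k))) as E.
  rewrite INR_IZR_INZ Z2Nat.id ?opp_IZR in E; [|lia].
  rewrite <- E; f_equal; ring.
Qed.

Lemma Rabs_sin_le x : Rabs (sin x) <= Rabs x.
Proof.
have Hpos : forall y, 0 <= y -> - y <= sin y <= y.
{ move=> y Hy. have := SIN_bound y. have := PI2_3_2. split.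
  - destruct (Rle_dec y 1); [have := sin_ge_0 y Hy; lra | lra].
  - destruct (Req_dec y 0) as [->|Hy0]; [rewrite sin_0; lra|].
    have := sin_lt_x y; lra. }
apply Rabs_le. destruct (Rle_dec 0 x).
- rewrite Rabs_right; [apply Hpos|]; lra.
- rewrite Rabs_left; [|lra]. have := Hpos (- x). rewrite sin_neg. lra.
Qed.

Lemma sin_lipschitz a b : Rabs (sin a - sin b) <= Rabs (a - b).
Proof.
rewrite form4 !Rabs_mult (Rabs_right 2); [|lra].
have Hs := Rabs_sin_le ((a - b) / 2).
have Hc : Rabs (cos ((a + b) / 2)) <= 1 by apply Rabs_le, COS_bound.
have -> : Rabs (a - b) = 2 * Rabs ((a - b) / 2).
{ rewrite Rabs_div; [|lra]. rewrite (Rabs_right 2); [field|lra]. }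
have := Rabs_pos (sin ((a - b) / 2)). have := Rabs_pos (cos ((a + b) / 2)). nra.
Qed.

Lemma cos_lipschitz a b : Rabs (cos a - cos b) <= Rabs (a - b).
Proof.
rewrite !cos_sin. have := sin_lipschitz (PI / 2 + a) (PI / 2 + b).
by have -> : PI / 2 + a - (PI / 2 + b) = a - b by ring.
Qed.

Lemma sin_sub_sin p q : sin p - sin q = - 2 * cos ((p + q) / 2) * sin ((q - p) / 2).
Proof.
rewrite form4. replace ((q - p) / 2) with (- ((p - q) / 2)) by field.
rewrite sin_neg; ring.
Qed.

Lemma cos_ge_of_abs_le x h : Rabs x <= h -> h <= PI -> cos h <= cos x.
Proof.
move=> Hx Hh. rewrite <- (cos_neg x) in *.
destruct (Rle_dec 0 x).
- rewrite cos_neg. rewrite Rabs_right in Hx; [|lra]. apply cos_decr_1; lra.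
- rewrite Rabs_left in Hx; [|lra]. apply cos_decr_1; lra.
Qed.

Lemma sin_half_bounds x : Rabs x <= PI / 2 ->
  (0 <= x -> 0 <= sin (x / 2) /\ 2 * sin (x / 2) <= x) /\ (x <= 0 -> sin (x / 2) <= 0).
Proof.
move/Rabs_le_between=> Hx. have HPI := PI_RGT_0. split => H.
- split; [apply sin_ge_0; lra|].
  destruct (Req_dec x 0) as [->|E]; [rewrite Rdiv_0_l sin_0; lra|].
  have := sin_lt_x (x / 2); lra.
- have := sin_ge_0 (- (x / 2)). rewrite sin_neg. lra.
Qed.

Lemma sin_ge_chord y : 0 <= y <= PI / 4 -> y * (2 * sqrt 2 / PI) <= sin y.
Proof.
move=> Hy. have HPI := PI_RGT_0.
set k := 2 * sqrt 2 / PI.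
have Hs2 : sqrt 2 * sqrt 2 = 2 by apply sqrt_sqrt; lra.
have Hs2p : 0 < sqrt 2 by apply sqrt_lt_R0; lra.
have Hend : sin (PI / 4) - k * (PI / 4) = 0.
{ rewrite sin_PI4 /k. have -> : 1 / sqrt 2 = sqrt 2 / 2 by field_simplify_eq; lra.
  field; lra. }
have Hder : forall t, derivable_pt_lim (fun y => sin y - k * y) t (cos t - k).
{ move=> t. apply is_derive_Reals. auto_derive; [done|ring]. }
apply Rnot_lt_le => Hlt.
have Hy0 : 0 < y by destruct (Req_dec y 0) as [E|E]; [rewrite E sin_0 in Hlt; lra|lra].
have Hy1 : y < PI / 4 by destruct (Req_dec y (PI / 4)) as [E|E]; [rewrite E in Hlt; lra|lra].
have [x1 [E1 H1]] := MVT_cor2 _ _ 0 y Hy0 (fun t _ => Hder t).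
have [x2 [E2 H2]] := MVT_cor2 _ _ y (PI / 4) Hy1 (fun t _ => Hder t).
rewrite sin_0 in E1.
have : cos x2 <= cos x1 by apply cos_decr_1; lra.
have : cos x1 - k < 0 by nra.
have : 0 < cos x2 - k by nra.
lra.
Qed.

Lemma chord_slope_ge : 2 / 3 <= 2 * sqrt 2 / PI.
Proof.
have HPI := PI_RGT_0. have H4 := PI_4.
have Hs : 7 / 5 <= sqrt 2.
{ apply Rnot_lt_le => H. have : sqrt 2 * sqrt 2 = 2 by apply sqrt_sqrt; lra.
  have := sqrt_pos 2. nra. }
apply (Rmult_le_reg_r PI); [lra|].
have -> : 2 * sqrt 2 / PI * PI = 2 * sqrt 2 by field; lra. lra.
Qed.

HB.instance Definition _ := Monoid.isComLaw.Build R 0 Rplus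
  (fun x y z => esym (Rplus_assoc x y z)) Rplus_comm Rplus_0_l.

Lemma sumR_le (I : Type) (r : seq I) (P : pred I) (F G : I -> R) :
  (forall i, P i -> F i <= G i) ->
  \big[Rplus/0]_(i <- r | P i) F i <= \big[Rplus/0]_(i <- r | P i) G i.
Proof.
move=> H. apply: (big_ind2 (fun x y => x <= y)) => [|x1 x2 y1 y2|i /H] //; lra.
Qed.

Lemma sumR_scal (I : Type) (r : seq I) (P : pred I) (F : I -> R) c :
  \big[Rplus/0]_(i <- r | P i) (c * F i) = c * \big[Rplus/0]_(i <- r | P i) F i.
Proof. symmetry; apply: (big_morph (fun x => c * x)) => [x y|] /=; ring. Qed.

Lemma sumR_sub (I : Type) (r : seq I) (P : pred I) (F G : I -> R) :
  \big[Rplus/0]_(i <- r | P i) (F i - G i) =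
  \big[Rplus/0]_(i <- r | P i) F i - \big[Rplus/0]_(i <- r | P i) G i.
Proof.
rewrite /Rminus big_split /=. congr (_ + _).
symmetry; apply: (big_morph Ropp) => [x y|] /=; ring.
Qed.

Lemma sumR_const (T : finType) (A : {pred T}) c :
  \big[Rplus/0]_(k in A) c = INR #|A| * c.
Proof.
rewrite big_const. elim: #|A| => [|n IH] /=; first ring.
rewrite IH; case: n {IH} => [|n] /=; ring.
Qed.

Lemma sumR_split_lb (N : nat) (A : {set 'I_N}) (c : 'I_N -> R) a b :
  (forall k, k \in A -> a <= c k) -> (forall k, k \notin A -> b <= c k) ->
  INR #|A| * a + (INR N - INR #|A|) * b <= \big[Rplus/0]_(k < N) c k.
Proof.
move=> Ha Hb. rewrite (bigID (fun k => k \in A)) /=.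
apply: Rplus_le_compat.
- rewrite -sumR_const. exact: sumR_le.
- have -> : INR N - INR #|A| = INR #|~: A|.
  { have E := cardsC A. rewrite card_ord in E.
    have -> : INR N = INR (#|A| + #|~: A|) by rewrite E. rewrite plus_INR; ring. }
  rewrite -sumR_const (eq_bigl (fun i => i \notin A)) => [|i]; last by rewrite in_setC.
  exact: sumR_le.
Qed.

Lemma sumR_ub (N : nat) (c : 'I_N -> R) b :
  (forall k, c k <= b) -> \big[Rplus/0]_(k < N) c k <= INR N * b.
Proof.
move=> H. have := @sumR_const 'I_N predT b. rewrite card_ord => <-.
exact: sumR_le.
Qed.

Lemma bigmaxR_ge (I : eqType) (r : seq I) (P : pred I) (F : I -> R) i :
  i \in r -> P i -> F i <= \big[Rmax/0]_(j <- r | P j) F j.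
Proof.
elim: r => [|a r IH] //. rewrite in_cons big_cons => /orP [/eqP -> | Hi] HP.
- rewrite HP. apply Rmax_l.
- have := IH Hi HP. case: (P a) => // H. eapply Rle_trans; [exact H | apply Rmax_r].
Qed.

Lemma bigmaxR_le (I : Type) (r : seq I) (P : pred I) (F : I -> R) c :
  0 <= c -> (forall i, P i -> F i <= c) -> \big[Rmax/0]_(i <- r | P i) F i <= c.
Proof. move=> Hc H. apply: (big_ind (fun v => v <= c)) => // *; exact: Rmax_lub. Qed.

Lemma diam_pair (N : nat) (A : {set 'I_N}) (x : 'I_N -> R) i j :
  i \in A -> j \in A -> Rabs (x i - x j) <= diam A x.
Proof.
move=> Hi Hj.
apply: (Rle_trans _ (\big[Rmax/0]_(j in A) Rabs (x i - x j))).
- by apply: (@bigmaxR_ge _ _ _ (fun j => Rabs (x i - x j))); rewrite ?mem_index_enum.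
- by apply: (@bigmaxR_ge _ _ _ (fun i => \big[Rmax/0]_(j in A) Rabs (x i - x j)));
    rewrite ?mem_index_enum.
Qed.

Lemma diam_le (N : nat) (A : {set 'I_N}) (x : 'I_N -> R) c :
  0 <= c -> (forall i j, i \in A -> j \in A -> x i - x j <= c) -> diam A x <= c.
Proof.
move=> Hc H. apply: bigmaxR_le => // i Hi. apply: bigmaxR_le => // j Hj.
apply Rabs_le. have := H i j Hi Hj. have := H j i Hj Hi. lra.
Qed.

Lemma diam_ge0 (N : nat) (A : {set 'I_N}) (x : 'I_N -> R) : 0 <= diam A x.
Proof.
apply: (big_ind (fun v => 0 <= v)) => [|a b Ha _|i _]; first lra.
- exact: Rle_trans Ha (Rmax_l _ _).
- apply: (big_ind (fun v => 0 <= v)) => [|a b Ha _|j _]; first lra.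
  + exact: Rle_trans Ha (Rmax_l _ _).
  + exact: Rabs_pos.
Qed.

Lemma derive_continuous_eps {f : R -> R} {s l : R} : is_derive f s l ->
  forall eps, 0 < eps -> exists del, 0 < del /\
    forall v, Rabs (v - s) < del -> Rabs (f v - f s) < eps.
Proof.
move=> /is_derive_Reals Hf eps He.
have [del [Hdel Hc]] := derivable_continuous_pt f s (exist _ l Hf) eps He.
exists del; split => // v Hv. destruct (Req_dec v s) as [->|Hne].
- rewrite Rminus_eq_0 Rabs_R0; lra.
- apply: (Hc v); split => //; split => //; exact: not_eq_sym.
Qed.

Lemma derive_neg_left {f : R -> R} {s l : R} : is_derive f s l -> l < 0 ->
  exists del, 0 < del /\ forall h, 0 < h < del -> f s < f (s - h).
Proof.
move=> /is_derive_Reals Hf Hl. have [d Hd] := Hf (- l / 2) ltac:(lra).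
exists d; split; [exact: cond_pos|] => h Hh.
have := Hd (- h) ltac:(lra) ltac:(rewrite Rabs_left; lra).
replace (s + - h) with (s - h) by ring.
move/Rabs_def2 => [H1 _].
have E : f (s - h) - f s = (f (s - h) - f s) / - h * (- h) by field; lra.
nra.
Qed.

Lemma common_delta (I : eqType) (r : seq I) (P : I -> R -> Prop) s :
  (forall q, q \in r -> exists del, 0 < del /\ forall v, Rabs (v - s) < del -> P q v) ->
  exists del, 0 < del /\ forall q v, q \in r -> Rabs (v - s) < del -> P q v.
Proof.
elim: r => [|a r IH] H.
- by exists 1; split; [lra|] => q v.
- have [d1 [Hd1 H1]] := H a (mem_head _ _).
  have [d2 [Hd2 H2]] : exists del, 0 < del /\ forall q v, q \in r -> Rabs (v - s) < del -> P q v.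
  { apply IH => q Hq. apply H. by rewrite in_cons Hq orbT. }
  exists (Rmin d1 d2); split; [exact: Rmin_pos|].
  have := Rmin_l d1 d2. have := Rmin_r d1 d2.
  move=> M2 M1 q v. rewrite in_cons => /orP [/eqP -> | Hq] Hv.
  + apply H1; lra.
  + apply H2 => //; lra.
Qed.

Lemma nonpos_of_neg_before {f : R -> R} {s l : R} (t1 : R) : is_derive f s l -> t1 < s ->
  (forall v, t1 <= v < s -> f v < 0) -> f s <= 0.
Proof.
move=> Hf Hts Hneg. apply Rnot_lt_le => Hpos.
have [d [Hd0 Hdd]] := derive_continuous_eps Hf Hpos.
set v := Rmax t1 (s - d / 2).
have := Rmax_l t1 (s - d / 2). have := Rmax_r t1 (s - d / 2). rewrite -/v => Hv2 Hv1.
have Hvs : v < s by apply Rmax_lub_lt; lra.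
have /Rabs_def2 := Hdd v ltac:(rewrite Rabs_left; lra).
have := Hneg v ltac:(lra). lra.
Qed.

Lemma neg_persists {f : R -> R} {s l : R} : is_derive f s l -> f s < 0 ->
  exists del, 0 < del /\ forall v, Rabs (v - s) < del -> f v < 0.
Proof.
move=> Hf Hneg. have [d [Hd0 Hdd]] := derive_continuous_eps Hf (ltac:(lra) : 0 < - f s).
exists d; split => // v /Hdd /Rabs_def2. lra.
Qed.

(* First touching time: if finitely many differentiable functions are negative
   at t1 and one of them is >= 0 at t3, there is a first time s in (t1, t3] at
   which some z q vanishes while all of them are still <= 0.  The time s is the
   supremum of the times up to which all of them stay negative. *)
Lemma first_touch (I : eqType) (r : seq I) (z dz : I -> R -> R) t1 t3 q3 :
  (forall q t, q \in r -> is_derive (z q) t (dz q t)) ->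
  (forall q, q \in r -> z q t1 < 0) -> t1 <= t3 -> q3 \in r -> 0 <= z q3 t3 ->
  exists s q, t1 < s <= t3 /\ q \in r /\ z q s = 0 /\
    (forall q', q' \in r -> z q' s <= 0) /\ (forall v, t1 <= v < s -> z q v < 0).
Proof.
move=> Hd H0 Ht13 Hq3 Hz3.
set E := fun u => t1 <= u <= t3 /\ forall v q, t1 <= v <= u -> q \in r -> z q v < 0.
have HE1 : E t1.
{ split; [lra|] => v q Hv Hq. replace v with t1 by lra. exact: H0. }
have [s [Hub Hlub]] := completeness E (ex_intro _ t3 (fun u Hu => proj2 (proj1 Hu)))
  (ex_intro _ t1 HE1).
have Hs1 : t1 <= s by apply Hub.
have Hs3 : s <= t3 by apply Hlub => u [Hu _]; lra.
have Hbefore : forall v q, t1 <= v < s -> q \in r -> z q v < 0.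
{ move=> v q Hv Hq. apply NNPP => Hn.
  suff : s <= v by lra.
  apply Hlub => u [Hu Hu2]. apply Rnot_lt_le => Hvu. apply Hn. apply: (Hu2 v q) => //; lra. }
have Hat : forall q, q \in r -> z q s <= 0.
{ move=> q Hq. destruct (Req_dec s t1) as [->|Hne]; first exact/Rlt_le/H0.
  apply: (@nonpos_of_neg_before _ _ _ t1 (Hd q s Hq)); first lra.
  move=> v Hv. exact: Hbefore. }
have [q [Hq Hzq]] : exists q, q \in r /\ z q s = 0.
{ apply NNPP => Hn.
  have Hall : forall q, q \in r -> z q s < 0.
  { move=> q Hq. case: (Hat q Hq) => // Heq. by case: Hn; exists q. }
  destruct (Req_dec s t3) as [Heq|Hne]; first by have := Hall q3 Hq3; rewrite Heq; lra.
  have [d [Hd0 Hdd]] := @common_delta _ r (fun q v => z q v < 0) s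
    (fun q Hq => neg_persists (Hd q s Hq) (Hall q Hq)).
  have := Rmin_l t3 (s + d / 2). have := Rmin_r t3 (s + d / 2). move=> Hu3 Hu2.
  have Hu : s < Rmin t3 (s + d / 2) by apply Rmin_glb_lt; lra.
  suff : E (Rmin t3 (s + d / 2)) by move/Hub; lra.
  split; [lra|] => v q' Hv Hq'.
  destruct (Rlt_dec v s); [apply Hbefore => //; lra|].
  apply Hdd => //. rewrite Rabs_right; lra. }
have Hst : t1 < s.
{ apply: Rnot_le_lt => Hst. have := H0 q Hq. replace t1 with s by lra. lra. }
exists s, q; split; [lra|]. do 3 (split => //). move=> v Hv. exact: Hbefore.
Qed.

Lemma barrier (I : eqType) (r : seq I) (z dz : I -> R -> R) t1 t2 :
  (forall q t, q \in r -> is_derive (z q) t (dz q t)) ->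
  (forall q, q \in r -> z q t1 < 0) ->
  (forall t q, t1 <= t <= t2 -> q \in r -> (forall q', q' \in r -> z q' t <= 0) ->
      z q t = 0 -> dz q t < 0) ->
  forall t q, t1 <= t <= t2 -> q \in r -> z q t < 0.
Proof.
move=> Hd H0 Hc t3 q3 Ht3 Hq3. apply Rnot_le_lt => Hbad.
have [s [q [Hs [Hq [Hzq [Hall Hbefore]]]]]] :=
  @first_touch _ r z dz t1 t3 q3 Hd H0 (proj1 Ht3) Hq3 Hbad.
have Hneg := Hc s q ltac:(lra) Hq Hall Hzq.
have [d [Hd0 Hdd]] := derive_neg_left (Hd q s Hq) Hneg.
have := Rmin_pos d (s - t1) Hd0 ltac:(lra).
have := Rmin_l d (s - t1). have := Rmin_r d (s - t1).
move: (Rmin d (s - t1)) => m Hm1 Hm2 Hm.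
have := Hdd (m / 2) ltac:(lra). have := Hbefore (s - m / 2) ltac:(lra). lra.
Qed.

Lemma stay_above (y dy : R -> R) t1 c :
  (forall t, is_derive y t (dy t)) -> c < y t1 ->
  (forall t, t1 <= t -> y t = c -> 0 < dy t) -> forall t, t1 <= t -> c < y t.
Proof.
move=> Hd H1 H t Ht.
have Hz : forall (q : unit) s, q \in [:: tt] -> is_derive (fun s => c - y s) s (- dy s).
{ move=> q s _. have := is_derive_minus _ _ _ _ _ (is_derive_const c s) (Hd s).
  by rewrite /minus /plus /opp /= Rplus_0_l. }
suff : c - y t < 0 by lra.
apply: (@barrier _ [:: tt] (fun _ s => c - y s) (fun _ s => - dy s) t1 t Hz _ _ t tt (conj Ht (Rle_refl t)))
  => //; first by move=> q _; lra.
move=> s q Hs _ _ Hys. have := H s (proj1 Hs). lra.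
Qed.

Lemma eventually_above (y dy : R -> R) T c r :
  (forall t, is_derive y t (dy t)) -> 0 < r ->
  (forall t, T <= t -> y t <= c -> r <= dy t) -> exists T', forall t, T' <= t -> c < y t.
Proof.
move=> Hd Hr H.
have [t1 [Ht1 Hy1]] : exists t1, T <= t1 /\ c < y t1.
{ apply NNPP => Hn.
  have Hall : forall t, T <= t -> y t <= c.
  { move=> t Ht. apply Rnot_lt_le => Hc. apply Hn. by exists t. }
  set L := Rabs (c - y T) / r + 1.
  have HL : Rabs (c - y T) = r * (L - 1) by rewrite /L; field; lra.
  have := Rabs_pos (c - y T). have := Rle_abs (c - y T). move=> Ha Hp.
  have HL0 : 1 <= L by nra.
  have [xi [E Hxi]] := MVT_cor2 y dy T (T + L) ltac:(lra)
     (fun x _ => proj1 (is_derive_Reals _ _ _) (Hd x)).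
  have := H xi ltac:(lra) (Hall xi ltac:(lra)). have := Hall (T + L) ltac:(lra).
  nra. }
exists t1 => t Ht. apply: (@stay_above y dy t1 c Hd Hy1 _ t Ht) => // s Hs Hys.
have := H s ltac:(lra) ltac:(lra). lra.
Qed.

Definition fgam' (g th : R) : R := g * cos th - (1 - g) * cos (th / 2).

Lemma fgam_derive g th : derivable_pt_lim (fgam g) th (fgam' g th).
Proof.
apply is_derive_Reals. rewrite /fgam /fgam'. auto_derive; [done|].
rewrite /Rdiv; field.
Qed.

Lemma fgam_continuous g : continuity (fgam g).
Proof. move=> th. apply: derivable_continuous_pt. exists (fgam' g th). exact: fgam_derive. Qed.

Lemma fgam0 g : fgam g 0 = 0.
Proof. rewrite /fgam Rdiv_0_l sin_0; ring. Qed.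

Lemma fgam_lipschitz g x y : 0 <= g <= 1 -> Rabs (fgam g x - fgam g y) <= Rabs (x - y).
Proof.
move=> Hg. rewrite /fgam.
have H1 := sin_lipschitz x y. have H2 := sin_lipschitz (x / 2) (y / 2).
replace (x / 2 - y / 2) with ((x - y) / 2) in H2 by field.
rewrite Rabs_div in H2; [|lra]. rewrite (Rabs_right 2) in H2; [|lra].
replace (g * sin x - 2 * (1 - g) * sin (x / 2) - (g * sin y - 2 * (1 - g) * sin (y / 2)))
  with (g * (sin x - sin y) + - (2 * (1 - g)) * (sin (x / 2) - sin (y / 2))) by ring.
apply: Rle_trans (Rabs_triang _ _) _. rewrite !Rabs_mult Rabs_Ropp.
rewrite (Rabs_right g) ?(Rabs_right (2 * (1 - g))); nra.
Qed.

Lemma fgam_half_angle g th : fgam g th = 2 * sin (th / 2) * (g * cos (th / 2) - (1 - g)).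
Proof.
rewrite /fgam. have {1}-> : th = 2 * (th / 2) by field. rewrite sin_2a. ring.
Qed.

(* The "cohesion" factor g cos D - (1 - g) controlling the attraction inside a
   gamma-ensemble of diameter D. *)
Definition cohesion (g D : R) : R := g * cos D - (1 - g).

Lemma cohesion_lipschitz g D e : 0 <= g <= 1 -> 0 <= e -> cohesion g D - e <= cohesion g (D + e).
Proof.
move=> Hg He. have := cos_lipschitz D (D + e). rewrite /cohesion.
have -> : D - (D + e) = - e by ring.
rewrite Rabs_Ropp (Rabs_right e); [|lra]. move/Rabs_le_between. nra.
Qed.

Section FGamma.
Variable g : R.
Hypothesis Hg : 1 / 2 < g <= 1.

(* a0 = acos ((1-g)/g) is the half-width of the interval [0, 2 a0] on which f_gamma
   is positive; all the geometry of Theorem 3.1 takes place in it. *)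
Let a0 := acos ((1 - g) / g).

Lemma ratio_bounds : 0 <= (1 - g) / g < 1.
Proof. split; [apply Rdiv_le_0_compat | apply Rlt_div_l]; lra. Qed.

Lemma cos_a0 : cos a0 = (1 - g) / g.
Proof. have := ratio_bounds. move=> ?. apply cos_acos; lra. Qed.

Lemma a0_bounds : 0 < a0 <= PI / 2.
Proof.
have Hc := ratio_bounds. have Hb : 0 <= a0 <= PI := acos_bound _. have Hca := cos_a0.
split.
- destruct (Req_dec a0 0) as [E|E]; [rewrite E cos_0 in Hca|]; lra.
- apply Rnot_lt_le => H. have : cos a0 < 0 by apply cos_lt_0; lra. lra.
Qed.

Lemma g_cos_a0 : g * cos a0 = 1 - g.
Proof. rewrite cos_a0. field. lra. Qed.

Lemma fgam'_nonincreasing x y : 0 <= x <= y -> y <= 2 * a0 -> fgam' g y <= fgam' g x.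
Proof.
move=> Hx Hy. have Ha := a0_bounds. have Hc := ratio_bounds. have E := g_cos_a0.
rewrite /fgam'.
have {1}-> : x = 2 * (x / 2) by field. have {1}-> : y = 2 * (y / 2) by field.
rewrite !cos_2a_cos.
have E1 : cos (y / 2) <= cos (x / 2) by apply cos_decr_1; lra.
have E2 : cos a0 <= cos (y / 2) by apply cos_decr_1; lra.
have E3 : 0 <= cos a0 by rewrite cos_a0; lra.
have : 0 <= (cos (x / 2) - cos (y / 2)) * (2 * g * (cos (x / 2) + cos (y / 2)) - (1 - g)).
{ apply Rmult_le_pos; nra. }
nra.
Qed.

(* By concavity, f_gamma cannot go down and then up again inside [0, 2 a0]. *)
Lemma fgam_no_dip p x q : 0 <= p -> p < x -> x < q -> q <= 2 * a0 ->
  fgam g x <= fgam g p -> fgam g q <= fgam g x.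
Proof.
move=> H1 H2 H3 H4 H5. apply Rnot_lt_le => H6.
have [x1 [E1 Hx1]] := MVT_cor2 (fgam g) (fgam' g) p x H2 (fun t _ => fgam_derive g t).
have [x2 [E2 Hx2]] := MVT_cor2 (fgam g) (fgam' g) x q H3 (fun t _ => fgam_derive g t).
have := @fgam'_nonincreasing x1 x2 ltac:(lra) ltac:(lra).
have : fgam' g x1 <= 0 by nra.
have : 0 < fgam' g x2 by nra.
lra.
Qed.

Lemma fgam_ge_min_ends a y b : 0 <= a <= y -> y <= b <= 2 * a0 ->
  Rmin (fgam g a) (fgam g b) <= fgam g y.
Proof.
move=> Hay Hyb. have := Rmin_l (fgam g a) (fgam g b). have := Rmin_r (fgam g a) (fgam g b).
destruct (Rle_dec (fgam g a) (fgam g y)) as [H|H]; first lra.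
destruct (Req_dec y b) as [->|Hb]; first lra.
have Hay' : a < y by destruct (Req_dec a y) as [E|E]; [rewrite E in H; lra | lra].
have := @fgam_no_dip a y b ltac:(lra) Hay' ltac:(lra) ltac:(lra) ltac:(lra). lra.
Qed.

Lemma fgam_pos th : 0 < th < 2 * a0 -> 0 < fgam g th.
Proof.
move=> H. have Ha := a0_bounds. have E := g_cos_a0. rewrite fgam_half_angle.
have S : 0 < sin (th / 2) by apply sin_gt_0; lra.
have C : cos a0 < cos (th / 2) by apply cos_decreasing_1; lra.
apply Rmult_lt_0_compat; [lra|]. rewrite -E. nra.
Qed.

Lemma cohesion_pos D : 0 <= D < a0 -> 0 < cohesion g D.
Proof.
move=> HD. have Ha := a0_bounds. have E := g_cos_a0.
have : cos a0 < cos D by apply cos_decreasing_1; lra.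
rewrite /cohesion -E. nra.
Qed.

(* The constant of part (3) is the maximal value f_gamma(a0). *)
Lemma threshold_eq :
  (2 * g - 1) * sqrt (2 * g - 1) / sqrt (2 * g) * ((2 - g) / (sqrt (g / 2) + (1 - g)))
  = fgam g a0.
Proof.
have Ha := a0_bounds. have Ec := g_cos_a0.
set s := sqrt (g / 2). set s2 := sqrt (2 * g - 1).
have Hs : 0 < s by apply sqrt_lt_R0; lra.
have Hss : s * s = g / 2 by apply sqrt_sqrt; lra.
have Hs2 : 0 <= s2 by apply sqrt_pos.
have Hss2 : s2 * s2 = 2 * g - 1 by apply sqrt_sqrt; lra.
have sq_inj : forall x y, 0 <= x -> 0 <= y -> x * x = y * y -> x = y by move=> *; nra.
have E1 : sqrt (2 * g) = 2 * s.
{ apply sq_inj; [apply sqrt_pos|lra|]. rewrite sqrt_sqrt; lra. }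
have S1 : sin a0 = s2 / g.
{ have : g * sin a0 = s2.
  { apply sq_inj => //; first by apply Rmult_le_pos; [lra|apply sin_ge_0; lra].
    have := sin2_cos2 a0. rewrite /Rsqr. nra. }
  move=> <-. field. lra. }
have S2 : sin (a0 / 2) = s2 / (2 * s).
{ have : 2 * s * sin (a0 / 2) = s2.
  { apply sq_inj => //; first by apply Rmult_le_pos; [lra|apply sin_ge_0; lra].
    have := cos_2a_sin (a0 / 2). have -> : 2 * (a0 / 2) = a0 by field.
    have -> : 2 * s * sin (a0 / 2) * (2 * s * sin (a0 / 2)) =
      4 * (s * s) * (sin (a0 / 2) * sin (a0 / 2)) by ring.
    rewrite Hss. nra. }
  move=> <-. field. lra. }
have B : (2 * g - 1) * (2 - g) = 2 * ((s + (1 - g)) * (s - (1 - g))).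
{ have -> : (s + (1 - g)) * (s - (1 - g)) = s * s - (1 - g) * (1 - g) by ring.
  rewrite Hss. field. }
rewrite /fgam E1 S1 S2.
have -> : (2 * g - 1) * s2 / (2 * s) * ((2 - g) / (s + (1 - g))) =
  s2 / (2 * s) * (((2 * g - 1) * (2 - g)) / (s + (1 - g))) by field; lra.
rewrite B. field. lra.
Qed.

End FGamma.

Definition mean_cos {N : nat} (x : 'I_N -> R) (M : R) : R :=
  \big[Rplus/0]_(k < N) cos (x k - M) / INR N.

(* U and W are representatives of x u and x w on the circle
   (they may differ from them by multiples of 2 PI). *)
Lemma rhs_gap (N : nat) (nu : 'I_N -> R) kappa (x : 'I_N -> R) u w U W :
  (0 < N)%coq_nat ->
  (forall k, sin (x k - x u) = sin (x k - U)) ->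
  (forall k, sin (x k - x w) = sin (x k - W)) ->
  kuramoto_rhs nu kappa x u - kuramoto_rhs nu kappa x w =
  nu u - nu w - 2 * kappa * sin ((U - W) / 2) * mean_cos x ((U + W) / 2).
Proof.
move=> HN Hu Hw. have := lt_0_INR _ HN => HNr.
rewrite /kuramoto_rhs /mean_cos (eq_bigr (fun k => sin (x k - U))) => [|k _]; last exact: Hu.
rewrite [X in _ - (_ + _ * X)](eq_bigr (fun k => sin (x k - W))) => [|k _]; last exact: Hw.
have -> : forall a b c p q : R, a + c * p - (b + c * q) = a - b + c * (p - q) by move=> *; ring.
rewrite -sumR_sub.
rewrite (eq_bigr (fun k => - 2 * sin ((U - W) / 2) * cos (x k - (U + W) / 2))) => [|k _].
- rewrite sumR_scal. set S := (\big[Rplus/0]_(k < N) _). field. lra.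
- rewrite sin_sub_sin.
  have -> : (x k - U + (x k - W)) / 2 = x k - (U + W) / 2 by field.
  have -> : (x k - W - (x k - U)) / 2 = (U - W) / 2 by field.
  ring.
Qed.

(* If a gamma-ensemble A lies within distance h <= PI of M, the mean of
   cos (x_k - M) is at least cohesion g h (the others contribute at least -1). *)
Lemma mean_cos_bounds (N : nat) (A : {set 'I_N}) (x : 'I_N -> R) M h g :
  (0 < N)%coq_nat -> g <= INR #|A| / INR N -> 0 <= g ->
  0 <= h <= PI -> (forall k, k \in A -> Rabs (x k - M) <= h) ->
  cohesion g h <= mean_cos x M <= 1.
Proof.
move=> HN Hfrac Hg Hh HA. have HNr := lt_0_INR _ HN.
have Hcard : INR #|A| <= INR N.
{ apply le_INR. have := max_card (mem A). rewrite card_ord. by move/leP. }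
have Hch : -1 <= cos h by have := COS_bound h; lra.
have Hlb := @sumR_split_lb N A (fun k => cos (x k - M)) (cos h) (-1)
  (fun k Hk => cos_ge_of_abs_le (HA k Hk) (proj2 Hh))
  (fun k _ => proj1 (COS_bound _)).
have Hub := @sumR_ub N (fun k => cos (x k - M)) 1 (fun k => proj2 (COS_bound _)).
rewrite /mean_cos /cohesion. split.
- apply Rle_div_r => //.
  have : g * INR N <= INR #|A| by apply Rle_div_r in Hfrac; lra.
  nra.
- apply Rle_div_l => //. lra.
Qed.

Lemma touching_gap_drift (N : nat) (A : {set 'I_N}) (nu : 'I_N -> R) kappa
    (x : 'I_N -> R) u w U W g d :
  (0 < N)%coq_nat -> 0 <= kappa -> g <= INR #|A| / INR N -> 0 <= g <= 1 ->
  (forall k, sin (x k - x u) = sin (x k - U)) ->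
  (forall k, sin (x k - x w) = sin (x k - W)) ->
  0 <= U - W <= PI -> (forall k, k \in A -> W <= x k <= U) ->
  nu u - nu w <= d ->
  kuramoto_rhs nu kappa x u - kuramoto_rhs nu kappa x w <= d - kappa * fgam g (U - W).
Proof.
move=> HN Hk Hfrac Hg Hu Hw HUW HA Hd.
rewrite (@rhs_gap N nu kappa x u w U W HN Hu Hw) fgam_half_angle.
have HA' : forall k, k \in A -> Rabs (x k - (U + W) / 2) <= (U - W) / 2.
{ move=> k /HA Hk'. apply Rabs_le. lra. }
have [Hm _] := @mean_cos_bounds N A x ((U + W) / 2) ((U - W) / 2) g HN Hfrac (proj1 Hg)
  ltac:(lra) HA'.
have Hs : 0 <= sin ((U - W) / 2) by apply sin_ge_0; lra.
rewrite /cohesion in Hm.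
have : 0 <= kappa * sin ((U - W) / 2) by apply Rmult_le_pos.
nra.
Qed.

Lemma pair_gap_bounds (N : nat) (A : {set 'I_N}) (nu : 'I_N -> R) kappa (x : 'I_N -> R)
    i j D g :
  (0 < N)%coq_nat -> 0 <= kappa -> g <= INR #|A| / INR N -> 0 <= g <= 1 ->
  i \in A -> j \in A -> 0 <= D <= PI / 2 ->
  (forall p q, p \in A -> q \in A -> Rabs (x p - x q) <= D) ->
  let s := sin ((x i - x j) / 2) in
  let F := kuramoto_rhs nu kappa x i - kuramoto_rhs nu kappa x j in
  (0 <= s -> F <= nu i - nu j - 2 * kappa * s * cohesion g D) /\
  (0 <= s -> nu i - nu j - 2 * kappa * s <= F) /\
  (s <= 0 -> nu i - nu j - 2 * kappa * s * cohesion g D <= F).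
Proof.
move=> HN Hk Hfrac Hg Hi Hj HD HA s F.
rewrite /F (@rhs_gap N nu kappa x i j (x i) (x j) HN (fun k => erefl) (fun k => erefl)) -/s.
have HA' : forall k, k \in A -> Rabs (x k - (x i + x j) / 2) <= D.
{ move=> k Hk'. have := HA k i Hk' Hi. have := HA k j Hk' Hj.
  move=> /Rabs_le_between ? /Rabs_le_between ?. apply Rabs_le. lra. }
have [Hlb Hub] := @mean_cos_bounds N A x ((x i + x j) / 2) D g HN Hfrac (proj1 Hg)
  ltac:(lra) HA'.
set m := mean_cos x ((x i + x j) / 2) in Hlb Hub *.
split; [|split] => Hs.
- have := Rmult_le_pos _ _ (Rmult_le_pos _ _ Hk Hs) (ltac:(lra) : 0 <= m - cohesion g D). nra.
- have := Rmult_le_pos _ _ (Rmult_le_pos _ _ Hk Hs) (ltac:(lra) : 0 <= 1 - m). nra.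
- have := Rmult_le_pos _ _ (Rmult_le_pos kappa (- s) Hk ltac:(lra))
    (ltac:(lra) : 0 <= m - cohesion g D). nra.
Qed.

Lemma shift_on_solution (N : nat) (nu : 'I_N -> R) kappa (A : {set 'I_N}) (m : 'I_N -> Z)
    (theta : 'I_N -> R -> R) :
  kuramoto_solution nu kappa theta -> kuramoto_solution nu kappa (shift_on A m theta).
Proof.
set n := fun i => if i \in A then m i else 0%Z.
have Hsh : forall i t, shift_on A m theta i t = theta i t + 2 * PI * IZR (n i).
{ move=> i t. rewrite /shift_on /n. case: (i \in A) => //. ring. }
move=> Hs i t.
have -> : kuramoto_rhs nu kappa (fun j => shift_on A m theta j t) i =
          kuramoto_rhs nu kappa (fun j => theta j t) i.
{ rewrite /kuramoto_rhs. do 2 f_equal. apply: eq_bigr => j _.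
  rewrite !Hsh -(sin_shift_2PI (theta j t - theta i t) (n j - n i)) minus_IZR.
  f_equal; ring. }
apply: (is_derive_ext (fun s => theta i s + 2 * PI * IZR (n i))) => [s|]; first by rewrite Hsh.
have := is_derive_plus _ _ t _ 0 (Hs i t) (is_derive_const (2 * PI * IZR (n i)) t).
by rewrite /plus /= Rplus_0_r.
Qed.

(* Arithmetic core of the limsup bound of part (3): with k = 2 sqrt 2 / PI the
   chord slope of sin on [0, PI/4], the level B0 + eps with kappa k B0 = D / K0
   attracts faster than the frequency gap D separates, provided the cohesion K1
   actually available is close enough to K0. *)
Lemma chord_rate_exceeds kappa K0 K1 D B0 eps e1 s :
  0 < kappa -> 0 < K0 -> 0 < D -> 0 < eps -> 0 < e1 <= K0 / 2 ->
  e1 * D <= kappa * K0 * K0 * eps / 6 -> K0 - e1 <= K1 ->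
  kappa * (2 * sqrt 2 / PI) * B0 = D / K0 ->
  (B0 + eps) / 2 * (2 * sqrt 2 / PI) <= s -> D < 2 * kappa * K1 * s.
Proof.
move=> Hk HK0 HD He He1 He1D HK1 HB0 Hs.
have Hk23 := chord_slope_ge. set k := 2 * sqrt 2 / PI in Hk23 HB0 Hs.
have Hkp : 0 < kappa * K1 by apply Rmult_lt_0_compat; lra.
have Hlevel : kappa * K1 * k * B0 = K1 * (D / K0) by rewrite -HB0; ring.
have Hcoh : D - e1 * D / K0 <= K1 * (D / K0).
{ have -> : D - e1 * D / K0 = (K0 - e1) * (D / K0) by field; lra.
  apply Rmult_le_compat_r; [apply Rlt_le, Rdiv_lt_0_compat|]; lra. }
have Hsmall : e1 * D / K0 <= kappa * K0 * eps / 6.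
{ apply Rle_div_l => //. nra. }
have Hmargin : kappa * K0 * eps / 3 <= kappa * K1 * k * eps.
{ have Hke : 0 <= kappa * eps by nra.
  have : 0 <= kappa * eps * ((K1 - K0 / 2) * k) by apply Rmult_le_pos; nra.
  have : 0 <= kappa * eps * (K0 / 2 * (k - 2 / 3)) by apply Rmult_le_pos; nra.
  lra. }
have Hchord : kappa * K1 * k * (B0 + eps) <= 2 * kappa * K1 * s.
{ have -> : 2 * kappa * K1 * s = 2 * (kappa * K1) * s by ring.
  have := Rmult_le_compat_l (2 * (kappa * K1)) _ _ ltac:(lra) Hs. lra. }
have : 0 < kappa * K0 * eps by repeat apply Rmult_lt_0_compat.
lra.
Qed.

Section Dynamics.
Variables (N : nat) (nu : 'I_N -> R) (kappa : R) (th : 'I_N -> R -> R).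
Variables (A B : {set 'I_N}) (g : R).
Hypothesis HN : (0 < N)%coq_nat.
Hypothesis Hk : 0 < kappa.
Hypothesis Hsol : kuramoto_solution nu kappa th.
Hypothesis HAB : A \subset B.
Hypothesis Hg : 1 / 2 < g <= 1.
Hypothesis Hfrac : g <= INR #|A| / INR N.

Local Notation d := (diam B nu).
Local Notation a0 := (acos ((1 - g) / g)).
Let vel i t := kuramoto_rhs nu kappa (fun j => th j t) i.

Lemma nu_gap_le u w : u \in B -> w \in B -> nu u - nu w <= d.
Proof. move=> Hu Hw. have := diam_pair nu Hu Hw. have := Rle_abs (nu u - nu w). lra. Qed.

Lemma gap_derive u w t : is_derive (fun s => th u s - th w s) t (vel u t - vel w t).
Proof. apply: is_derive_minus; exact: Hsol. Qed.

Lemma gap_barrier (P : {set 'I_N * 'I_N}) t0 t2 L0 s :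
  (forall q, q \in P -> th q.1 t0 - th q.2 t0 < L0) ->
  (forall t u w, t0 <= t <= t2 -> (u, w) \in P ->
     (forall q, q \in P -> th q.1 t - th q.2 t <= L0 + s * (t - t0)) ->
     th u t - th w t = L0 + s * (t - t0) -> vel u t - vel w t < s) ->
  forall t u w, t0 <= t <= t2 -> (u, w) \in P -> th u t - th w t < L0 + s * (t - t0).
Proof.
move=> H0 Htouch t u w Ht Huw.
suff : th u t - th w t - (L0 + s * (t - t0)) < 0 by lra.
apply: (@barrier _ (enum P) (fun q t => th q.1 t - th q.2 t - (L0 + s * (t - t0)))
  (fun q t => vel q.1 t - vel q.2 t - s) t0 t2 _ _ _ t (u, w) Ht); rewrite ?mem_enum //.
- move=> q t' _. apply: is_derive_minus; first exact: gap_derive.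
  auto_derive => //. ring.
- move=> q; rewrite mem_enum => /H0. rewrite Rminus_diag Rmult_0_r. lra.
- move=> t' [u' w'] Ht' Hq Hall Hz. rewrite mem_enum in Hq.
  have := Htouch t' u' w' Ht' Hq (fun q Hq' => ltac:(have := Hall q; rewrite mem_enum;
    move=> /(_ Hq'); lra)) ltac:(rewrite /= in Hz; lra).
  rewrite /=. lra.
Qed.

Lemma cluster_barrier t0 t2 L0 s :
  (forall i j, i \in A -> j \in A -> th i t0 - th j t0 < L0) ->
  (forall t, t0 <= t <= t2 -> 0 <= L0 + s * (t - t0) <= PI /\
     d - kappa * fgam g (L0 + s * (t - t0)) < s) ->
  forall t i j, t0 <= t <= t2 -> i \in A -> j \in A -> th i t - th j t < L0 + s * (t - t0).
Proof.
move=> H0 Hlev t i j Ht Hi Hj.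
apply: (@gap_barrier (setX A A) t0 t2 L0 s _ _ t i j Ht); rewrite ?in_setX ?Hi ?Hj //.
- by case=> p q; rewrite in_setX => /andP [Hp Hq]; apply: H0.
- move=> t' u w Ht' /[!in_setX] /andP [Hu Hw] Hall Hz.
  have [HL Hd] := Hlev t' Ht'.
  have HA : forall k, k \in A -> th w t' <= th k t' <= th u t'.
  { move=> k Hk'. have := Hall (u, k). have := Hall (k, w).
    rewrite !in_setX Hu Hw Hk' /= => /(_ isT) ? /(_ isT) ?. lra. }
  have := @touching_gap_drift N A nu kappa (fun j => th j t') u w (th u t') (th w t') g d
    HN (Rlt_le _ _ Hk) Hfrac ltac:(lra) (fun k => erefl) (fun k => erefl) ltac:(lra) HA
    (nu_gap_le (subsetP HAB u Hu) (subsetP HAB w Hw)).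
  rewrite Hz /vel. lra.
Qed.

Lemma cluster_contracts t0 Llo Lhi eta :
  0 < eta -> 0 <= Llo <= Lhi -> Lhi <= PI ->
  (forall y, Llo <= y <= Lhi -> d - kappa * fgam g y <= - eta) ->
  (forall i j, i \in A -> j \in A -> th i t0 - th j t0 < Lhi) ->
  forall t i j, t0 + 2 * (Lhi - Llo) / eta <= t -> i \in A -> j \in A ->
  th i t - th j t < Llo.
Proof.
move=> Heta HL HPI Hmargin H0 t i j Ht Hi Hj.
set T := t0 + 2 * (Lhi - Llo) / eta in Ht.
have HT : t0 <= T by rewrite /T; have := Rdiv_le_0_compat (2 * (Lhi - Llo)) eta; lra.
have ET : Lhi + - (eta / 2) * (T - t0) = Llo by rewrite /T; field; lra.
have Hdescent : forall i j, i \in A -> j \in A -> th i T - th j T < Llo.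
{ move=> i' j' Hi' Hj'. rewrite -ET.
  apply: (cluster_barrier H0 _ (conj HT (Rle_refl T)) Hi' Hj') => t' Ht'.
  have Hy : Llo <= Lhi + - (eta / 2) * (t' - t0) <= Lhi by rewrite -{1}ET; nra.
  have := Hmargin _ Hy. lra. }
have := @cluster_barrier T t Llo 0 Hdescent _ t i j (conj Ht (Rle_refl t)) Hi Hj.
rewrite Rmult_0_l Rplus_0_r. apply => t' _.
rewrite Rmult_0_l Rplus_0_r. have := Hmargin Llo ltac:(lra). lra.
Qed.

Variables (ell phi1 : R).
Hypothesis Hell : 0 < ell < 2 * a0.
Hypothesis Hdk : d < kappa * fgam g ell.
Hypothesis Hphi : is_phi1 g kappa d phi1.
Hypothesis Hinit : forall i j, i \in A -> j \in A -> th i 0 - th j 0 <= ell.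

Lemma ell_le_PI : ell <= PI.
Proof. have := a0_bounds Hg. lra. Qed.

Lemma levels_above_ell : exists del, 0 < del /\
  forall L, ell <= L <= ell + del -> d < kappa * fgam g L /\ L < 2 * a0.
Proof.
set m := kappa * fgam g ell - d.
exists (Rmin (m / (2 * kappa)) (a0 - ell / 2)).
have := Rmin_l (m / (2 * kappa)) (a0 - ell / 2).
have := Rmin_r (m / (2 * kappa)) (a0 - ell / 2).
have Hm : 0 < m / (2 * kappa) by apply Rdiv_lt_0_compat; rewrite /m; lra.
split; [apply Rmin_pos; lra|] => L HL.
split; last by lra.
have /Rabs_le_between := @fgam_lipschitz g L ell ltac:(lra).
rewrite Rabs_right; last by lra.
have : kappa * (L - ell) <= m / 2.
{ have -> : m / 2 = kappa * (m / (2 * kappa)) by field; lra.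
  apply Rmult_le_compat_l; lra. }
rewrite /m. nra.
Qed.

Lemma cluster_within_ell t i j : 0 <= t -> i \in A -> j \in A -> th i t - th j t <= ell.
Proof.
move=> Ht Hi Hj. apply Rnot_lt_le => Hgap.
have [del [Hdel Hlev]] := levels_above_ell.
set L := ell + Rmin (th i t - th j t - ell) del / 2.
have := Rmin_l (th i t - th j t - ell) del. have := Rmin_r (th i t - th j t - ell) del.
have := Rmin_pos (th i t - th j t - ell) del ltac:(lra) Hdel.
rewrite -/L. move=> ? ? ?.
have [HfL HL2] := Hlev L ltac:(rewrite /L; lra).
have Ha0 := a0_bounds Hg.
have := @cluster_contracts 0 L L (kappa * fgam g L - d) ltac:(lra) ltac:(rewrite /L; lra)
  ltac:(lra) ltac:(move=> y Hy; replace y with L by lra; lra)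
  ltac:(move=> i' j' Hi' Hj'; have := Hinit Hi' Hj'; rewrite /L; lra) t i j.
rewrite Rminus_diag Rmult_0_r Rdiv_0_l Rplus_0_r => /(_ Ht Hi Hj). rewrite /L. lra.
Qed.

Lemma phi1_spec : 0 <= phi1 < 2 * a0 /\ kappa * fgam g phi1 = d /\
  (forall q, 0 <= q < 2 * a0 -> fgam g q = d / kappa -> phi1 <= q).
Proof.
have [Hp [Hfp Hmin]] := Hphi. do 2 (split => //). rewrite Hfp. field. lra.
Qed.

(* phi1 lies below every contracting level b in (0, 2 a0), by the intermediate
   value theorem and the minimality of phi1. *)
Lemma phi1_below b : 0 < b < 2 * a0 -> d < kappa * fgam g b -> phi1 < b.
Proof.
move=> Hb Hdb. have [_ [_ Hmin]] := phi1_spec.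
have Hd0 : 0 <= d / kappa by apply Rdiv_le_0_compat; [exact: diam_ge0 | lra].
have Hfb : d / kappa < fgam g b by apply Rlt_div_l; lra.
have Hc : continuity (fun x => fgam g x - d / kappa).
{ apply: continuity_minus; [exact: fgam_continuous | exact: continuity_const]. }
have [q [Hq Hfq]] := IVT_cor _ 0 b Hc ltac:(lra) ltac:(rewrite /= fgam0; nra).
have Hqb : q <> b by move=> E; rewrite E in Hfq; lra.
have := Hmin q ltac:(lra) ltac:(lra). lra.
Qed.

Lemma contracting_above_phi1 y b : phi1 < y <= b -> b <= 2 * a0 ->
  d < kappa * fgam g b -> d < kappa * fgam g y.
Proof.
move=> Hy Hb Hdb. have [[Hp0 _] [Hfp _]] := phi1_spec.
destruct (Req_dec y b) as [->|Hyb] => //.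
apply Rnot_le_lt => Hc.
have Hle : fgam g y <= fgam g phi1 by apply (Rmult_le_reg_l kappa); lra.
have := @fgam_no_dip g Hg phi1 y b Hp0 ltac:(lra) ltac:(lra) Hb Hle.
have := Rmult_le_compat_l kappa (fgam g b) (fgam g y) ltac:(lra). lra.
Qed.

Lemma cluster_eventually_within eps : 0 < eps ->
  exists T, forall t i j, T <= t -> i \in A -> j \in A -> th i t - th j t <= phi1 + eps.
Proof.
move=> He. have Ha0 := a0_bounds Hg. have [[Hp0 _] _] := phi1_spec.
have Hpl : phi1 < ell by apply: phi1_below; lra.
destruct (Rle_dec ell (phi1 + eps)) as [Hle|Hlt].
{ exists 0 => t i j Ht Hi Hj. have := cluster_within_ell Ht Hi Hj. lra. }
have [del [Hdel Hlev]] := levels_above_ell.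
have [HfLhi HLhi] := Hlev (ell + del) ltac:(lra).
have HfLlo := @contracting_above_phi1 (phi1 + eps) ell ltac:(lra) ltac:(lra) Hdk.
set eta := Rmin (kappa * fgam g (phi1 + eps) - d) (kappa * fgam g (ell + del) - d).
have Heta : 0 < eta by apply Rmin_pos; lra.
have Hmargin : forall y, phi1 + eps <= y <= ell + del -> d - kappa * fgam g y <= - eta.
{ move=> y Hy. have := @fgam_ge_min_ends g Hg (phi1 + eps) y (ell + del) ltac:(lra) ltac:(lra).
  have := Rmin_l (kappa * fgam g (phi1 + eps) - d) (kappa * fgam g (ell + del) - d).
  have := Rmin_r (kappa * fgam g (phi1 + eps) - d) (kappa * fgam g (ell + del) - d).
  rewrite -/eta => ? ? Hm.
  have [Hy'|Hy'] : fgam g (phi1 + eps) <= fgam g y \/ fgam g (ell + del) <= fgam g y.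
  { destruct (Rle_dec (fgam g (phi1 + eps)) (fgam g (ell + del))).
    - by rewrite Rmin_left in Hm; [left|].
    - by rewrite Rmin_right in Hm; [right|lra]. }
  all: have := Rmult_le_compat_l kappa _ _ (Rlt_le _ _ Hk) Hy'; lra. }
exists (0 + 2 * (ell + del - (phi1 + eps)) / eta) => t i j Ht Hi Hj.
apply: Rlt_le.
apply: (@cluster_contracts 0 (phi1 + eps) (ell + del) eta) => //; try lra.
move=> i' j' Hi' Hj'. have := Hinit Hi' Hj'. lra.
Qed.

Lemma ensemble_diameter_bounds :
  (forall t, 0 <= t -> diam A (fun i => th i t) <= ell) /\
  limsup_le (fun t => diam A (fun i => th i t)) phi1.
Proof.
have [[Hp0 _] _] := phi1_spec. split.
- move=> t Ht. apply: diam_le => [|i j Hi Hj]; [lra | exact: cluster_within_ell].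
- move=> eps He. have [T HT] := cluster_eventually_within He.
  exists T => t Ht. apply: diam_le => [|i j Hi Hj]; [lra | exact: HT].
Qed.

(* Oscillators of B outside the ensemble cannot cross a level ell + 2 PI n, measured
   from above the ensemble: at a touching time the whole ensemble lies within
   [th w, th i - 2 PI n], an arc of length ell, so the gap contracts. *)
Lemma outsider_stays_below i (n : Z) : i \in B ->
  (forall q, q \in A -> th i 0 - th q 0 < ell + 2 * PI * IZR n) ->
  forall t q, 0 <= t -> q \in A -> th i t - th q t < ell + 2 * PI * IZR n.
Proof.
move=> Hi H0 t q Ht Hq.
have := @gap_barrier (setX [set i] A) 0 t (ell + 2 * PI * IZR n) 0 _ _ t i q.
rewrite Rmult_0_l Rplus_0_r in_setX in_set1 eqxx Hq. apply => //; last lra.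
- by case=> u w; rewrite in_setX in_set1 => /andP [/eqP -> /H0].
- move=> t' u w Ht' /[!in_setX] /andP [/[!in_set1] /eqP -> Hw] Hall.
  rewrite Rmult_0_l Rplus_0_r => Hz.
  have HA : forall k, k \in A -> th w t' <= th k t' <= th i t' - 2 * PI * IZR n.
  { move=> k Hk'. have := Hall (i, k). rewrite in_setX in_set1 eqxx Hk' /= Rmult_0_l.
    have := cluster_within_ell (proj1 Ht') Hk' Hw. move=> ? /(_ isT). lra. }
  have Hshift : forall k, sin (th k t' - th i t') = sin (th k t' - (th i t' - 2 * PI * IZR n)).
  { move=> k. rewrite -(sin_shift_2PI (th k t' - th i t') n). f_equal; ring. }
  have := @touching_gap_drift N A nu kappa (fun j => th j t') i w (th i t' - 2 * PI * IZR n)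
    (th w t') g d HN (Rlt_le _ _ Hk) Hfrac ltac:(lra) Hshift (fun k => erefl)
    ltac:(have := ell_le_PI; lra) HA (nu_gap_le Hi (subsetP HAB w Hw)).
  have -> : th i t' - 2 * PI * IZR n - th w t' = ell by lra.
  rewrite /vel. lra.
Qed.

Lemma outsider_stays_above i (n : Z) : i \in B ->
  (forall q, q \in A -> th q 0 - th i 0 < ell + 2 * PI * IZR n) ->
  forall t q, 0 <= t -> q \in A -> th q t - th i t < ell + 2 * PI * IZR n.
Proof.
move=> Hi H0 t q Ht Hq.
have := @gap_barrier (setX A [set i]) 0 t (ell + 2 * PI * IZR n) 0 _ _ t q i.
rewrite Rmult_0_l Rplus_0_r in_setX in_set1 eqxx Hq. apply => //; last lra.
- by case=> u w; rewrite in_setX in_set1 => /andP [/H0 ? /eqP ->].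
- move=> t' u w Ht' /[!in_setX] /andP [Hu /[!in_set1] /eqP ->] Hall.
  rewrite Rmult_0_l Rplus_0_r => Hz.
  have HA : forall k, k \in A -> th i t' + 2 * PI * IZR n <= th k t' <= th u t'.
  { move=> k Hk'. have := Hall (k, i). rewrite in_setX in_set1 eqxx Hk' /= Rmult_0_l.
    have := cluster_within_ell (proj1 Ht') Hu Hk'. move=> ? /(_ isT). lra. }
  have Hshift : forall k, sin (th k t' - th i t') = sin (th k t' - (th i t' + 2 * PI * IZR n)).
  { move=> k. rewrite -(sin_shift_2PI (th k t' - (th i t' + 2 * PI * IZR n)) n). f_equal; ring. }
  have := @touching_gap_drift N A nu kappa (fun j => th j t') u i (th u t')
    (th i t' + 2 * PI * IZR n) g d HN (Rlt_le _ _ Hk) Hfrac ltac:(lra) (fun k => erefl) Hshift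
    ltac:(have := ell_le_PI; lra) HA (nu_gap_le (subsetP HAB u Hu) Hi).
  have -> : th u t' - (th i t' + 2 * PI * IZR n) = ell by lra.
  rewrite /vel. lra.
Qed.

Lemma two_PI_multiple_above x : exists n : Z, x < 2 * PI * IZR n <= x + 2 * PI.
Proof.
have HPI := PI_RGT_0. exists (up (x / (2 * PI))).
have [H1 H2] := archimed (x / (2 * PI)).
have E : x = 2 * PI * (x / (2 * PI)) by field; lra.
split; nra.
Qed.

Lemma outsider_gap i p t : i \in B -> p \in A -> 0 <= t ->
  Rabs (th i t - th p t) <= ell + Rabs (th i 0 - th p 0) + 2 * PI.
Proof.
move=> Hi Hp Ht.
have [n Hn] := two_PI_multiple_above (Rabs (th i 0 - th p 0)).
have /Rabs_le_between Hgap0 := Rle_refl (Rabs (th i 0 - th p 0)).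
have Hup0 : forall q, q \in A -> th i 0 - th q 0 < ell + 2 * PI * IZR n.
{ move=> q Hq. have := Hinit Hp Hq. lra. }
have Hlo0 : forall q, q \in A -> th q 0 - th i 0 < ell + 2 * PI * IZR n.
{ move=> q Hq. have := Hinit Hq Hp. lra. }
have := outsider_stays_below Hi Hup0 Ht Hp. have := outsider_stays_above Hi Hlo0 Ht Hp.
move=> ? ?. apply Rabs_le. lra.
Qed.

Lemma ensemble_nonempty : exists p, p \in A.
Proof.
apply/card_gt0P/ltP/INR_lt. rewrite INR_0. apply Rnot_le_lt => H.
have H0 : INR #|A| = 0 by have := pos_INR #|A|; lra.
move: Hfrac. rewrite H0 Rdiv_0_l. lra.
Qed.

Lemma B_bounded : exists M, forall t, 0 <= t -> diam B (fun i => th i t) <= M.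
Proof.
have [p Hp] := ensemble_nonempty.
have HpB := subsetP HAB p Hp.
have HD0 := diam_ge0 B (fun i => th i 0). have HPI := PI_RGT_0.
set D0 := diam B (fun i => th i 0) in HD0 *.
exists (2 * (ell + D0 + 2 * PI)) => t Ht. apply: diam_le => [|i j Hi Hj]; first lra.
have := outsider_gap Hi Hp Ht. have := outsider_gap Hj Hp Ht.
have := diam_pair (fun i => th i 0) Hi HpB. have := diam_pair (fun i => th i 0) Hj HpB.
rewrite -/D0 => ? ? /Rabs_le_between ? /Rabs_le_between ?. lra.
Qed.

Hypothesis Hthr : d < kappa * fgam g a0.

(* Under the threshold of part (3), phi1 lies below a0, where the cohesion is positive. *)
Lemma phi1_lt_a0 : phi1 < a0.
Proof. have := a0_bounds Hg. move=> ?. apply: phi1_below => //; lra. Qed.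

Lemma pair_eventual_bounds i j e1 : i \in A -> j \in A -> 0 < e1 -> phi1 + e1 < a0 ->
  exists T, forall t, T <= t ->
  let s := sin ((th i t - th j t) / 2) in
  let F := vel i t - vel j t in
  Rabs (th i t - th j t) <= phi1 + e1 /\
  (0 <= s -> F <= nu i - nu j - 2 * kappa * s * cohesion g (phi1 + e1)) /\
  (0 <= s -> nu i - nu j - 2 * kappa * s <= F) /\
  (s <= 0 -> nu i - nu j - 2 * kappa * s * cohesion g (phi1 + e1) <= F).
Proof.
move=> Hi Hj He1 Hlt. have [[Hp0 _] _] := phi1_spec. have Ha0 := a0_bounds Hg.
have [T HT] := cluster_eventually_within He1.
exists T => t Ht s F.
have Hall : forall p q, p \in A -> q \in A -> Rabs (th p t - th q t) <= phi1 + e1.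
{ move=> p q Hp Hq. have := HT t p q Ht Hp Hq. have := HT t q p Ht Hq Hp.
  move=> ? ?. apply Rabs_le. lra. }
split; first exact: Hall.
exact: (@pair_gap_bounds N A nu kappa (fun k => th k t) i j (phi1 + e1) g HN
  (Rlt_le _ _ Hk) Hfrac ltac:(lra) Hi Hj ltac:(lra) Hall).
Qed.

Lemma gap_eventually_below i j e1 b : i \in A -> j \in A -> 0 < e1 -> phi1 + e1 < a0 ->
  0 < b -> nu i - nu j < 2 * kappa * cohesion g (phi1 + e1) * sin (b / 2) ->
  exists T, forall t, T <= t -> th i t - th j t < b.
Proof.
move=> Hi Hj He1 Hlt Hb Hrate. have [[Hp0 _] _] := phi1_spec. have Ha0 := a0_bounds Hg.
have [T HT] := pair_eventual_bounds Hi Hj He1 Hlt.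
destruct (Rle_dec b (phi1 + e1)) as [Hbe|Hbe]; last first.
{ exists T => t /HT [/Rabs_le_between ? _]. lra. }
have HK1 := @cohesion_pos g Hg (phi1 + e1) ltac:(lra).
set r := 2 * kappa * cohesion g (phi1 + e1) * sin (b / 2) - (nu i - nu j).
suff Hcond : forall t, T <= t -> th j t - th i t <= - b -> r <= vel j t - vel i t.
{ have Hr : 0 < r by rewrite /r; lra.
  have [T' HT'] := eventually_above (gap_derive j i) Hr Hcond.
  exists T' => t /HT'. lra. }
move=> t Ht Hy. have [/Rabs_le_between Habs [Hup _]] := HT t Ht.
have Hs : sin (b / 2) <= sin ((th i t - th j t) / 2) by apply sin_incr_1; lra.
have Hsb : 0 < sin (b / 2) by apply sin_gt_0; lra.
have := Hup ltac:(lra).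
have : 0 <= kappa * cohesion g (phi1 + e1) * (sin ((th i t - th j t) / 2) - sin (b / 2)).
{ apply Rmult_le_pos; [apply Rmult_le_pos|]; lra. }
rewrite /r. lra.
Qed.

Lemma gap_liminf i j : i \in A -> j \in A -> nu j < nu i ->
  liminf_ge (fun t => th i t - th j t) ((nu i - nu j) / kappa).
Proof.
move=> Hi Hj Hnu eps He.
have Ha0 := a0_bounds Hg. have Hpa := phi1_lt_a0. have [[Hp0 _] _] := phi1_spec.
have HK1 := @cohesion_pos g Hg (phi1 + (a0 - phi1) / 2) ltac:(lra).
have [T HT] := @pair_eventual_bounds i j ((a0 - phi1) / 2) Hi Hj ltac:(lra) ltac:(lra).
set r := Rmin (nu i - nu j) (kappa * eps).
have Hr : 0 < r by apply Rmin_pos; nra.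
have := Rmin_l (nu i - nu j) (kappa * eps). have := Rmin_r (nu i - nu j) (kappa * eps).
rewrite -/r => Hr2 Hr1.
have Ec : kappa * ((nu i - nu j) / kappa - eps) = nu i - nu j - kappa * eps by field; lra.
suff Hcond : forall t, T <= t -> th i t - th j t <= (nu i - nu j) / kappa - eps ->
    r <= vel i t - vel j t.
{ have [T' HT'] := eventually_above (gap_derive i j) Hr Hcond.
  exists T' => t /HT'. lra. }
move=> t Ht Hx. have [Habs [_ [Hlow Hneg]]] := HT t Ht.
have [Hpos Hnonpos] := sin_half_bounds (x := th i t - th j t) ltac:(lra).
destruct (Rle_dec 0 (th i t - th j t)) as [H0|H0].
- have [Hs Hs2] := Hpos H0. have := Hlow Hs.
  have := Rmult_le_compat_l kappa _ _ (Rlt_le _ _ Hk)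
    (ltac:(lra) : 2 * sin ((th i t - th j t) / 2) <= (nu i - nu j) / kappa - eps).
  lra.
- have Hs := Hnonpos ltac:(lra). have := Hneg Hs.
  have : 0 <= kappa * (- sin ((th i t - th j t) / 2)) * cohesion g (phi1 + (a0 - phi1) / 2).
  { apply Rmult_le_pos; [apply Rmult_le_pos|]; lra. }
  lra.
Qed.

Lemma gap_limsup i j : i \in A -> j \in A -> nu j < nu i ->
  limsup_le (fun t => th i t - th j t)
    (PI / (2 * sqrt 2 * cohesion g phi1) * ((nu i - nu j) / kappa)).
Proof.
move=> Hi Hj Hnu eps He.
have Ha0 := a0_bounds Hg. have Hpa := phi1_lt_a0. have [[Hp0 _] _] := phi1_spec.
have HPI := PI_RGT_0. have Hs2 : 0 < sqrt 2 by apply sqrt_lt_R0; lra.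
have HK0 := @cohesion_pos g Hg phi1 ltac:(lra).
set K0 := cohesion g phi1 in HK0 *. set D := nu i - nu j.
set B0 := PI / (2 * sqrt 2 * K0) * (D / kappa).
have HD : 0 < D by rewrite /D; lra.
have HB0 : 0 <= B0.
{ apply Rmult_le_pos; apply Rlt_le, Rdiv_lt_0_compat; try lra.
  repeat apply Rmult_lt_0_compat; lra. }
have EB0 : kappa * (2 * sqrt 2 / PI) * B0 = D / K0 by rewrite /B0; field; lra.
set e1 := Rmin ((a0 - phi1) / 2) (Rmin (K0 / 2) (kappa * K0 * K0 * eps / (6 * D))).
have := Rmin_l ((a0 - phi1) / 2) (Rmin (K0 / 2) (kappa * K0 * K0 * eps / (6 * D))).
have := Rmin_r ((a0 - phi1) / 2) (Rmin (K0 / 2) (kappa * K0 * K0 * eps / (6 * D))).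
have := Rmin_l (K0 / 2) (kappa * K0 * K0 * eps / (6 * D)).
have := Rmin_r (K0 / 2) (kappa * K0 * K0 * eps / (6 * D)).
have Hq : 0 < kappa * K0 * K0 * eps / (6 * D).
{ apply Rdiv_lt_0_compat; [repeat apply Rmult_lt_0_compat|]; lra. }
have He1 : 0 < e1 by apply Rmin_pos; [lra|apply Rmin_pos; lra].
rewrite -/e1 => He1d He1c He1b He1a.
have He1D : e1 * D <= kappa * K0 * K0 * eps / 6.
{ have -> : kappa * K0 * K0 * eps / 6 = kappa * K0 * K0 * eps / (6 * D) * D by field; lra.
  apply Rmult_le_compat_r; lra. }
destruct (Rle_dec (B0 + eps) (PI / 2)) as [Hb|Hb]; last first.
{ have [T HT] := @pair_eventual_bounds i j e1 Hi Hj He1 ltac:(lra).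
  exists T => t /HT [/Rabs_le_between ? _]. lra. }
have [T HT] := @gap_eventually_below i j e1 (B0 + eps) Hi Hj He1 ltac:(lra) ltac:(lra)
  (@chord_rate_exceeds kappa K0 (cohesion g (phi1 + e1)) D B0 eps e1 (sin ((B0 + eps) / 2))
     Hk HK0 HD He ltac:(lra) He1D
     (@cohesion_lipschitz g phi1 e1 ltac:(lra) ltac:(lra)) EB0
     (@sin_ge_chord ((B0 + eps) / 2) ltac:(lra))).
exists T => t /HT. lra.
Qed.

Lemma gap_vanishes i j : i \in A -> j \in A -> nu i = nu j ->
  forall eps, 0 < eps -> exists T, forall t, T <= t -> Rabs (th i t - th j t) < eps.
Proof.
move=> Hi Hj Hnu eps He.
have Ha0 := a0_bounds Hg. have Hpa := phi1_lt_a0. have [[Hp0 _] _] := phi1_spec.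
have HK1 := @cohesion_pos g Hg (phi1 + (a0 - phi1) / 2) ltac:(lra).
set b := Rmin eps 1. have := Rmin_l eps 1. have := Rmin_r eps 1.
have Hb : 0 < b by apply Rmin_pos; lra.
rewrite -/b => Hb1 Hbe.
have Hsb : 0 < sin (b / 2) by apply sin_gt_0; have := PI2_1; lra.
have Hrate : 0 < 2 * kappa * cohesion g (phi1 + (a0 - phi1) / 2) * sin (b / 2).
{ repeat apply Rmult_lt_0_compat; lra. }
have [T1 HT1] := @gap_eventually_below i j ((a0 - phi1) / 2) b Hi Hj ltac:(lra) ltac:(lra) Hb
  ltac:(rewrite Hnu; lra).
have [T2 HT2] := @gap_eventually_below j i ((a0 - phi1) / 2) b Hj Hi ltac:(lra) ltac:(lra) Hb
  ltac:(rewrite Hnu; lra).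
exists (Rmax T1 T2) => t Ht.
have := HT1 t ltac:(have := Rmax_l T1 T2; lra). have := HT2 t ltac:(have := Rmax_r T1 T2; lra).
move=> ? ?. apply Rabs_def1; lra.
Qed.

Lemma relative_phase_asymptotics i j : i \in A -> j \in A ->
  (nu i > nu j ->
     liminf_ge (fun t => th i t - th j t) ((nu i - nu j) / kappa) /\
     limsup_le (fun t => th i t - th j t)
       (PI / (2 * sqrt 2 * (g * cos phi1 - (1 - g))) * ((nu i - nu j) / kappa))) /\
  (nu i = nu j -> is_lim (fun t => th i t - th j t) p_infty 0).
Proof.
move=> Hi Hj. split => Hnu; first by split; [exact: gap_liminf | exact: gap_limsup].
apply is_lim_spec => eps. have [T HT] := gap_vanishes Hi Hj Hnu (cond_pos eps).
exists T => t Ht. rewrite Rminus_0_r. apply: HT. lra.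
Qed.

End Dynamics.

Lemma coupling_above_critical g ell d kappa :
  1 / 2 < g <= 1 -> 0 < ell < 2 * acos ((1 - g) / g) -> 0 <= d ->
  kappa > d / (g * sin ell - 2 * (1 - g) * sin (ell / 2)) ->
  0 < kappa /\ d < kappa * fgam g ell.
Proof.
move=> Hg Hell Hd Hkap.
have Hf : 0 < fgam g ell by apply: fgam_pos.
have Hdk : d < kappa * fgam g ell.
{ have := Rmult_lt_compat_r (fgam g ell) _ _ Hf Hkap.
  have -> : d / (g * sin ell - 2 * (1 - g) * sin (ell / 2)) * fgam g ell = d.
  { rewrite /fgam in Hf *. field. lra. }
  lra. }
split => //. apply Rnot_le_lt => H. have : kappa * fgam g ell <= 0 by nra. lra.
Qed.

Theorem theorem3p1 (N : nat) (nu : 'I_N -> R) (kappa : R)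
  (theta : 'I_N -> R -> R) (A B : {set 'I_N}) (gamma ell : R) :
  (2 <= N)%nat ->
  0 <= kappa ->
  kuramoto_solution nu kappa theta ->
  A \subset B ->
  1 / 2 < gamma <= 1 ->
  0 < ell < 2 * acos (1 / gamma - 1) ->
  kappa > diam B nu / (gamma * sin ell - 2 * (1 - gamma) * sin (ell / 2)) ->
  gamma_ensemble_arclength A gamma ell theta 0 ->
  forall (m : 'I_N -> Z) (phi1 : R),
  diam A (fun i => shift_on A m theta i 0) <= ell ->
  is_phi1 gamma kappa (diam B nu) phi1 ->
  let th := shift_on A m theta in
  (* (1) *)
  ((forall t, 0 <= t -> diam A (fun i => th i t) <= ell) /\
   limsup_le (fun t => diam A (fun i => th i t)) phi1) /\
  (* (2) *)
  (exists M, forall t, 0 <= t -> diam B (fun i => th i t) <= M) /\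
  (* (3) *)
  (diam B nu / kappa <
     (2 * gamma - 1) * sqrt (2 * gamma - 1) / sqrt (2 * gamma)
     * ((2 - gamma) / (sqrt (gamma / 2) + (1 - gamma))) ->
   forall i j, i \in A -> j \in A ->
   (nu i > nu j ->
      liminf_ge (fun t => th i t - th j t) ((nu i - nu j) / kappa) /\
      limsup_le (fun t => th i t - th j t)
        (PI / (2 * sqrt 2 * (gamma * cos phi1 - (1 - gamma))) * ((nu i - nu j) / kappa))) /\
   (nu i = nu j -> is_lim (fun t => th i t - th j t) p_infty 0)).
Proof.
move=> HN2 _ Hsol0 HAB Hg Hell0 Hkap [Hens _] m phi1 Hm0 Hphi th.
have HN : (0 < N)%coq_nat by move/ltP: HN2; lia.
have Hfrac : gamma <= INR #|A| / INR N by exact: Rge_le.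
have Hell : 0 < ell < 2 * acos ((1 - gamma) / gamma).
{ by have <- : 1 / gamma - 1 = (1 - gamma) / gamma by field; lra. }
have [Hk Hdk] := coupling_above_critical Hg Hell (diam_ge0 B nu) Hkap.
have Hsol : kuramoto_solution nu kappa th by exact: shift_on_solution.
have Hinit : forall i j, i \in A -> j \in A -> th i 0 - th j 0 <= ell.
{ move=> i j Hi Hj. have := diam_pair (fun i => shift_on A m theta i 0) Hi Hj.
  have := Rle_abs (th i 0 - th j 0). rewrite /th. lra. }
split; [|split].
- exact (ensemble_diameter_bounds HN Hk Hsol HAB Hg Hfrac Hell Hdk Hphi Hinit).
- exact (B_bounded HN Hk Hsol HAB Hg Hfrac Hell Hdk Hinit).
- move=> Hthr. apply (relative_phase_asymptotics HN Hk Hsol HAB Hg Hfrac Hell Hdk Hphi Hinit).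
  rewrite (threshold_eq Hg) in Hthr.
  have := Rmult_lt_compat_l kappa _ _ Hk Hthr.
  have -> : kappa * (diam B nu / kappa) = diam B nu by field; lra.
  done.
Qed.
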